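(* Let $C=c_0c_1\dots c_{m-1}c_0$ and $D=(0)(1)\dots(n-1)(0)$ be reflexive digraph cycles with $D$ non-contractible. The subgraph $\mathrm{Mon}_0(C,D)$ of $\mathrm{Hom}(C,D)$ induced by the monotone homomorphisms of wind $0$ is isomorphic to $D$.
   Context: A digraph is a binary relation $\to$ on a finite vertex set; reflexive means every vertex has a loop. A digraph cycle $C=c_0c_1\dots c_{m-1}c_0$ (indices mod $m$, $m\ge3$) has underlying graph the cycle with edges $c_ic_{i+1}$; $D=(0)(1)\dots(n-1)(0)$ has vertex set the integers mod $n$. $D$ is non-contractible if it has length at least $4$ or is a directed $3$-cycle. A homomorphism $\phi:C\to D$ satisfies $u\to v\Rightarrow\phi(u)\to\phi(v)$. $\mathrm{Hom}(C,D)$ is the digraph whose vertices are the homomorphisms $C\to D$ with $\phi\to\phi'$ iff $\phi(u)\to\phi'(v)$ for all arcs $u\to v$ of $C$. Under $\phi$, edge $c_ic_{i+1}$ is increasing, stationary or decreasing as $\phi(c_{i+1})-\phi(c_i)$ is $1,0,-1$ (mod $n$); the increase of $\phi$ is the number of increasing minus the number of decreasing edges, and the wind is the increase divided by $n$. A homomorphism is monotone if every edge is increasing or stationary, or every edge is decreasing or stationary (so the constant maps are exactly the monotone wind-$0$ maps). *)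

From mathcomp Require Import all_boot all_order all_algebra.
Set Implicit Arguments. Unset Strict Implicit. Unset Printing Implicit Defensive.
Import GRing.Theory Num.Theory.

(* A reflexive digraph cycle with vertex set 'I_k = {0,...,k-1} (integers mod k):
   the vertices are v_0 v_1 ... v_{k-1} v_0 in this cyclic order (ordS is the
   cyclic successor), k >= 3, every vertex has a loop, every arc joins a vertex
   to itself or to a cyclic neighbour, and every cycle edge v_i v_{i+1} carries
   at least one arc (in some direction). *)
Definition refl_dicycle (k : nat) (r : rel 'I_k) : Prop :=
  [/\ 3 <= k,
      forall i, r i i,
      forall i j, r i j -> [|| i == j, j == ordS i | i == ordS j]
    & forall i, r i (ordS i) || r (ordS i) i].

Definition directed_cycle (k : nat) (r : rel 'I_k) : Prop :=
  (forall i, r i (ordS i) && ~~ r (ordS i) i) \/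
  (forall i, r (ordS i) i && ~~ r i (ordS i)).

Definition noncontractible (n : nat) (r : rel 'I_n) : Prop :=
  4 <= n \/ (n = 3 /\ directed_cycle r).

Section HomDefs.
Variables (m n : nat) (rC : rel 'I_m) (rD : rel 'I_n).

Definition is_hom (phi : {ffun 'I_m -> 'I_n}) : bool :=
  [forall u, forall v, rC u v ==> rD (phi u) (phi v)].

Definition edge_diff (phi : {ffun 'I_m -> 'I_n}) (i : 'I_m) : nat :=
  (phi (ordS i) + n - phi i) %% n.

Definition increasing_edge phi i := edge_diff phi i == 1 %% n.
Definition stationary_edge phi i := edge_diff phi i == 0.
Definition decreasing_edge phi i := edge_diff phi i == (n - 1) %% n.

Definition edge_incr (phi : {ffun 'I_m -> 'I_n}) (i : 'I_m) : int :=
  if increasing_edge phi i then 1%R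
  else if decreasing_edge phi i then (-1)%R else 0%R.

Definition increase (phi : {ffun 'I_m -> 'I_n}) : int :=
  (\sum_(i < m) edge_incr phi i)%R.

Definition wind (phi : {ffun 'I_m -> 'I_n}) : rat :=
  ((increase phi)%:~R / n%:R)%R.

Definition monotone (phi : {ffun 'I_m -> 'I_n}) : bool :=
  [forall i, increasing_edge phi i || stationary_edge phi i] ||
  [forall i, decreasing_edge phi i || stationary_edge phi i].

Definition mon0b (phi : {ffun 'I_m -> 'I_n}) : bool :=
  [&& is_hom phi, monotone phi & wind phi == 0%R].

Definition Mon0 := {phi : {ffun 'I_m -> 'I_n} | mon0b phi}.

Definition hom_arc (phi psi : {ffun 'I_m -> 'I_n}) : bool :=
  [forall u, forall v, rC u v ==> rD (phi u) (psi v)].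

Definition Mon0_rel : rel Mon0 := fun p q => hom_arc (val p) (val q).

End HomDefs.

Definition digraph_iso (T U : Type) (r : rel T) (s : rel U) : Prop :=
  exists f : T -> U, bijective f /\ forall x y, r x y = s (f x) (f y).
Arguments Mon0_rel {m n} rC rD.

From mathcomp Require Import all_boot all_order all_algebra.
From mathcomp Require Import zify.

Set Implicit Arguments.
Unset Strict Implicit.
Unset Printing Implicit Defensive.

Import GRing.Theory Num.Theory.

(* For n >= 3 the contributions +1, 0, -1 of an edge are distinct, so the edge
   contributions of a monotone map all have the same sign; if they sum to 0
   (wind 0) every edge is stationary and the map is constant.  Thus Mon_0(C,D)
   is exactly the set of constant maps, and because C has a loop, const a ->
   const b in Hom(C,D) iff a -> b in D. *)

Section EdgeContributions.
Variables (m n : nat) (phi : {ffun 'I_m -> 'I_n}).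

Lemma stationary_edgeE i : stationary_edge phi i = (phi (ordS i) == phi i).
Proof.
rewrite /stationary_edge /edge_diff -(inj_eq val_inj) /=.
have := ltn_ord (phi i); have := ltn_ord (phi (ordS i)).
move: (nat_of_ord (phi i)) (nat_of_ord (phi (ordS i))) => a b lt_b lt_a.
apply/eqP/eqP => [|->]; last by rewrite addnC addnK modnn.
case: (leqP a b) => [le_ab | lt_ba].
  rewrite -addnBAC // modnDr modn_small; lia.
rewrite modn_small; lia.
Qed.

Lemma edge_incr_increasing i : increasing_edge phi i -> edge_incr phi i = 1%R.
Proof. by rewrite /edge_incr => ->. Qed.

Hypothesis n_gt2 : 2 < n.

Lemma edge_incr_stationary i : stationary_edge phi i -> edge_incr phi i = 0%R.
Proof.
rewrite /edge_incr /increasing_edge /decreasing_edge /stationary_edge => /eqP ->.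
by rewrite !modn_small; try lia; rewrite !ifF //; apply/negbTE; lia.
Qed.

Lemma edge_incr_decreasing i : decreasing_edge phi i -> edge_incr phi i = (-1)%R.
Proof.
rewrite /edge_incr /increasing_edge /decreasing_edge => /eqP ->.
by rewrite !modn_small; try lia; rewrite ifF ?eqxx //; apply/negbTE; lia.
Qed.

Lemma wind_eq0 : (wind phi == 0%R) = (increase phi == 0%R).
Proof.
by rewrite /wind mulf_eq0 invr_eq0 pnatr_eq0 intr_eq0 orbC; case: eqP => //; lia.
Qed.

Lemma increase0_signed {s : int} :
  (forall j, 0 <= s * edge_incr phi j)%R -> increase phi = 0%R ->
  forall i, (s * edge_incr phi i = 0)%R.
Proof.
move=> s_ge0 incr0 i; apply: (psumr_eq0P (P := predT) (F := fun j => s * edge_incr phi j)%R) => //.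
by rewrite -mulr_sumr -/(increase phi) incr0 mulr0.
Qed.

Lemma monotone_increase0_stationary :
  monotone phi -> increase phi = 0%R -> forall i, stationary_edge phi i.
Proof.
move=> + incr0 i; case/orP=> /forallP mono.
- have sign_ge0 j : (0 <= 1 * edge_incr phi j)%R.
    by case/orP: (mono j) => [/edge_incr_increasing | /edge_incr_stationary] ->.
  case/orP: (mono i) => // /edge_incr_increasing incr_i.
  by have := increase0_signed sign_ge0 incr0 i; rewrite incr_i.
- have sign_ge0 j : (0 <= -1 * edge_incr phi j)%R.
    by case/orP: (mono j) => [/edge_incr_decreasing | /edge_incr_stationary] ->.
  case/orP: (mono i) => // /edge_incr_decreasing incr_i.
  by have := increase0_signed sign_ge0 incr0 i; rewrite incr_i.
Qed.

End EdgeContributions.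

Lemma val_iter_ordS m (i : 'I_m) k : val (iter k (@ordS m) i) = (i + k) %% m.
Proof.
elim: k => [|k IHk] /=; first by rewrite addn0 modn_small.
by rewrite IHk addnS -[((i + k) %% m).+1]addn1 -[(i + k).+1]addn1 modnDml.
Qed.

Lemma iter_ordS_surj m (i j : 'I_m) : exists k, iter k (@ordS m) i = j.
Proof.
exists (j + m - i); apply: val_inj; rewrite val_iter_ordS.
have -> : i + (j + m - i) = j + m by have := ltn_ord i; lia.
by rewrite modnDr modn_small.
Qed.

Lemma all_stationary_const m n (phi : {ffun 'I_m -> 'I_n}) :
  (forall i, stationary_edge phi i) -> forall i j, phi j = phi i.
Proof.
move=> stat i j; have [k <-] := iter_ordS_surj i j.
by elim: k => //= k IHk; rewrite -IHk; apply/eqP; rewrite -stationary_edgeE.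
Qed.

Section ConstantMaps.
Variables (m n : nat) (rC : rel 'I_m) (rD : rel 'I_n).
Hypothesis n_gt2 : 2 < n.

Lemma mon0b_const (a : 'I_n) : rD a a -> mon0b rC rD [ffun=> a].
Proof.
have stat i : stationary_edge [ffun=> a] i by rewrite stationary_edgeE !ffunE.
move=> rD_aa; apply/and3P; split.
- by apply/forallP => u; apply/forallP => v; apply/implyP; rewrite !ffunE.
- by apply/orP; left; apply/forallP => i; rewrite stat orbT.
- rewrite wind_eq0 // /increase big1 // => i _.
  exact: edge_incr_stationary.
Qed.

Lemma mon0b_constE (phi : {ffun 'I_m -> 'I_n}) (i : 'I_m) :
  mon0b rC rD phi -> phi = [ffun=> phi i].
Proof.
case/and3P=> _ mono; rewrite wind_eq0 // => /eqP incr0.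
apply/ffunP => j; rewrite ffunE; apply: all_stationary_const.
exact: monotone_increase0_stationary.
Qed.

Lemma hom_arc_const (u v : 'I_m) (a b : 'I_n) :
  rC u v -> hom_arc rC rD [ffun=> a] [ffun=> b] = rD a b.
Proof.
move=> rC_uv; apply/forallP/idP => [/(_ u) /forallP /(_ v) | rD_ab x].
  by rewrite rC_uv !ffunE.
by apply/forallP => y; apply/implyP; rewrite !ffunE.
Qed.

End ConstantMaps.

Theorem fact3p1 (m n : nat) (rC : rel 'I_m) (rD : rel 'I_n) :
  refl_dicycle rC -> refl_dicycle rD -> noncontractible rD ->
  digraph_iso (Mon0_rel rC rD) rD.
Proof.
move=> [m_gt2 rC_refl _ _] [n_gt2 rD_refl _ _] _.
pose i0 : 'I_m := Ordinal (leq_trans (isT : 0 < 3) m_gt2).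
pose const_mon0 a : Mon0 rC rD := exist _ [ffun=> a] (mon0b_const rC n_gt2 (rD_refl a)).
exists (fun p : Mon0 rC rD => val p i0); split.
  exists const_mon0 => [[phi mon0_phi] | a]; last by rewrite /= ffunE.
  by apply: val_inj; rewrite /= -(mon0b_constE n_gt2 i0 mon0_phi).
move=> [phi mon0_phi] [psi mon0_psi]; rewrite /Mon0_rel /=.
rewrite (mon0b_constE n_gt2 i0 mon0_phi) (mon0b_constE n_gt2 i0 mon0_psi).
by rewrite (hom_arc_const _ _ _ (rC_refl i0)) !ffunE.
Qed.
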